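(* Let $p$ be a peak of a coherent tangent bundle $(\mathcal E,\langle\,,\rangle,D,\psi)$ on $M^2$, let $(U;u,v)$ be a $g$-coordinate system at $p$, and let $\gamma\colon[0,1)\to U$ be a $C^1$-regular curve with $\gamma(0)=p$ such that either (1) $\dot\gamma(0)$ is not a null vector (i.e. $\psi_p(\dot\gamma(0))\neq 0$), or (2) $\gamma$ is a singular curve (i.e. $\gamma([0,1))\subset\Sigma$). Then the limit $$\Psi_\gamma:=\lim_{t\to+0}\frac{\psi(\dot\gamma(t))}{|\psi(\dot\gamma(t))|}\in\mathcal E_p$$ exists.
   Context: A coherent tangent bundle over an oriented $2$-manifold $M^2$ is a tuple $(\mathcal E,\langle\,,\rangle,D,\psi)$ where $\mathcal E$ is an orientable rank-$2$ vector bundle over $M^2$ with a fiber metric $\langle\,,\rangle$ and a metric connection $D$, and $\psi\colon TM^2\to\mathcal E$ is a bundle homomorphism satisfying $D_X\psi(Y)-D_Y\psi(X)=\psi([X,Y])$. Fix a co-orientation $\mu$ (a section of $\mathcal E^*\wedge\mathcal E^*$ with $\mu(e_1,e_2)=\pm1$ on orthonormal frames). A point $p$ is singular if $\psi_p$ is not bijective; $\Sigma$ is the singular set; on a positively oriented chart $(u,v)$, $\lambda=\mu(\psi(\partial_u),\psi(\partial_v))$ and $\Sigma=\{\lambda=0\}$. A singular point is non-degenerate if $d\lambda\ne0$ there; then $\Sigma$ is locally a regular curve and the kernel of $\psi_p$ (the null direction) is one-dimensional. A non-degenerate singular point is an $A_2$-point if the null direction is transversal to the singular curve. A singular point $p$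 that is not an $A_2$-point is a peak if there is a coordinate neighborhood $U$ of $p$ such that (i) all singular points in $U\setminus\{p\}$ are $A_2$-points, (ii) $\operatorname{rank}\psi_p=1$, and (iii) $\Sigma\cap U$ consists of finitely many (possibly zero) $C^1$-regular curves starting from $p$. $g$-coordinate system: fix a Riemannian metric $g$ on $M^2$ and the $(1,1)$-tensor $I$ with $ds^2(X,Y)=g(IX,Y)$, where $ds^2=\psi^*\langle\,,\rangle$. Near a peak $p$, $I$ has two distinct eigenvalues $0\le\lambda_1<\lambda_2$; a $g$-coordinate system at $p$ is a chart $(U;u,v)$ around $p$ such that the $u$-curves are $\lambda_1$-eigendirections and the $v$-curves are $\lambda_2$-eigendirections of $I$ (so $\partial_u$ is the null direction at singular points and $\psi(\partial_v)\ne0$ at $p$). *)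

From Stdlib Require Import Reals List.
From Coquelicot Require Import Coquelicot.
Open Scope R_scope.

Definition pt := (R * R)%type.

Definition pu (f : pt -> R) (q : pt) : R := Derive (fun x => f (x, snd q)) (fst q).
Definition pv (f : pt -> R) (q : pt) : R := Derive (fun y => f (fst q, y)) (snd q).

Fixpoint Ck (n : nat) (U : pt -> Prop) (f : pt -> R) : Prop :=
  (forall q, U q -> continuous f q) /\
  match n with
  | O => True
  | S m =>
      (forall q, U q -> ex_derive (fun x => f (x, snd q)) (fst q)
                      /\ ex_derive (fun y => f (fst q, y)) (snd q))
      /\ Ck m U (pu f) /\ Ck m U (pv f)
  end.

Definition smooth_on (U : pt -> Prop) (f : pt -> R) : Prop := forall n, Ck n U f.
Definition vsmooth_on (U : pt -> Prop) (F : pt -> R * R) : Prop :=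
  smooth_on U (fun q => fst (F q)) /\ smooth_on U (fun q => snd (F q)).

Definition vpu (F : pt -> R * R) (q : pt) : R * R :=
  (pu (fun r => fst (F r)) q, pu (fun r => snd (F r)) q).
Definition vpv (F : pt -> R * R) (q : pt) : R * R :=
  (pv (fun r => fst (F r)) q, pv (fun r => snd (F r)) q).

Definition vadd (a b : R * R) : R * R := (fst a + fst b, snd a + snd b).
Definition vscal (k : R) (a : R * R) : R * R := (k * fst a, k * snd a).
Definition dot (a b : R * R) : R := fst a * fst b + snd a * snd b.
Definition det2 (a b : R * R) : R := fst a * snd b - snd a * fst b.
Definition Jrot (a : R * R) : R * R := (- snd a, fst a).
Definition vnorm (a : R * R) : R := sqrt (dot a a).
Definition normalize (a : R * R) : R * R := vscal (/ vnorm a) a.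

(* A coherent tangent bundle restricted to the chart U, written in a
   positively oriented orthonormal frame (e1,e2) of E over U:
   - fiber metric = standard dot product, co-orientation mu = det2;
   - metric connection D: D_X e1 = om(X) e2, D_X e2 = - om(X) e1, i.e.
     D_X s = X s + om(X) J s, with om(d_u) = om_u, om(d_v) = om_v;
   - psi_u = psi(d_u), psi_v = psi(d_v);
   - coherence D_X psi(Y) - D_Y psi(X) = psi([X,Y]) on coordinate fields. *)
Record CTB_chart (U : pt -> Prop) := {
  om_u : pt -> R;
  om_v : pt -> R;
  psi_u : pt -> R * R;
  psi_v : pt -> R * R;
  om_u_smooth : smooth_on U om_u;
  om_v_smooth : smooth_on U om_v;
  psi_u_smooth : vsmooth_on U psi_u;
  psi_v_smooth : vsmooth_on U psi_v;
  coherent : forall q, U q ->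
    vadd (vpu psi_v q) (vscal (om_u q) (Jrot (psi_v q)))
    = vadd (vpv psi_u q) (vscal (om_v q) (Jrot (psi_u q)))
}.

Arguments om_u {U}. Arguments om_v {U}.
Arguments psi_u {U}. Arguments psi_v {U}.

Section CTB.
Context {U : pt -> Prop} (C : CTB_chart U).

Definition psi_at (q : pt) (X : R * R) : R * R :=
  vadd (vscal (fst X) (psi_u C q)) (vscal (snd X) (psi_v C q)).

Definition lam (q : pt) : R := det2 (psi_u C q) (psi_v C q).

Definition singular (q : pt) : Prop := U q /\ lam q = 0.

Definition nondegenerate (q : pt) : Prop :=
  singular q /\ (pu lam q <> 0 \/ pv lam q <> 0).

Definition null_vector (q : pt) (eta : R * R) : Prop :=
  eta <> (0, 0) /\ psi_at q eta = (0, 0).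

(* A_2: non-degenerate, and the null direction is transversal to the
   singular curve {lam = 0}, whose tangent line is ker d lam *)
Definition A2_point (q : pt) : Prop :=
  nondegenerate q /\
  forall eta, null_vector q eta -> pu lam q * fst eta + pv lam q * snd eta <> 0.

Definition rank1 (q : pt) : Prop :=
  lam q = 0 /\ (psi_u C q <> (0, 0) \/ psi_v C q <> (0, 0)).
End CTB.

Definition C1_regular_curve (S : pt -> Prop) (c cd : R -> pt) : Prop :=
  (forall t, 0 <= t < 1 -> S (c t)) /\
  (forall t, 0 < t < 1 ->
     is_derive (fun s => fst (c s)) t (fst (cd t)) /\
     is_derive (fun s => snd (c s)) t (snd (cd t))) /\
  filterlim (fun h => (fst (c h) - fst (c 0)) / h) (at_right 0) (locally (fst (cd 0))) /\
  filterlim (fun h => (snd (c h) - snd (c 0)) / h) (at_right 0) (locally (snd (cd 0))) /\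
  (forall t, 0 <= t < 1 ->
     filterlim cd (within (fun s => 0 <= s < 1) (locally t)) (locally (cd t))) /\
  (forall t, 0 <= t < 1 -> cd t <> (0, 0)).

Definition peak {U : pt -> Prop} (C : CTB_chart U) (p : pt) : Prop :=
  singular C p /\ ~ A2_point C p /\
  exists V : pt -> Prop,
    open V /\ V p /\ (forall q, V q -> U q) /\
    (forall q, V q -> q <> p -> singular C q -> A2_point C q) /\
    rank1 C p /\
    exists cs : list ((R -> pt) * (R -> pt)),
      (forall c, In c cs -> C1_regular_curve V (fst c) (snd c) /\ fst c 0 = p) /\
      (forall q, V q ->
         (singular C q <->
          (q = p \/ exists c, In c cs /\ exists t, 0 <= t < 1 /\ fst c t = q))).

Definition riemannian_metric (U : pt -> Prop) (g11 g12 g22 : pt -> R) : Prop :=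
  smooth_on U g11 /\ smooth_on U g12 /\ smooth_on U g22 /\
  forall q, U q -> 0 < g11 q /\ 0 < g11 q * g22 q - g12 q * g12 q.

(* (U;u,v) is a g-coordinate system: with ds^2 = psi^* <,> and
   ds^2(X,Y) = g(I X, Y), one has I d_u = l1 d_u, I d_v = l2 d_v, l1 < l2. *)
Definition g_coordinate_system {U : pt -> Prop} (C : CTB_chart U)
    (g11 g12 g22 : pt -> R) : Prop :=
  exists l1 l2 : pt -> R, forall q, U q ->
    0 <= l1 q < l2 q /\
    dot (psi_u C q) (psi_u C q) = l1 q * g11 q /\
    dot (psi_u C q) (psi_v C q) = l1 q * g12 q /\
    dot (psi_v C q) (psi_u C q) = l2 q * g12 q /\
    dot (psi_v C q) (psi_v C q) = l2 q * g22 q.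

From Stdlib Require Import Reals Lra Psatz.
From Coquelicot Require Import Coquelicot.
Open Scope R_scope.

(* In a g-coordinate system the vectors psi(d_u) and psi(d_v) are orthogonal and
   psi(d_v) never vanishes, so at a singular point psi(d_u) = 0 and the image of
   any tangent vector (a, b) is b psi(d_v).  If the curve is not singular, its
   tangent at p is not null and the limit is just the normalized image of that
   tangent.  If the curve is singular, the limit is +-psi_v(p)/|psi_v(p)| as soon
   as b keeps a fixed sign near t = 0, which by continuity of gamma' follows once
   b has no zeros there.  It has none, because b cannot vanish at a
   point gamma(t) != p: there gamma' would be a multiple of d_u, so d_u psi(d_u)
   = 0 there, whence d_u lambda = 0 and the null direction d_u would be tangent
   to the singular curve, contradicting the A_2 condition near the peak. *)

Lemma ball_R (a e x : R) : ball a e x <-> Rabs (x - a) < e.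
Proof. reflexivity. Qed.

Lemma locally_neq (a : R) : a <> 0 -> locally a (fun x => x <> 0).
Proof.
  intros Ha. exists (mkposreal (Rabs a) (Rabs_pos_lt a Ha)). intros x Hx ->.
  apply (proj1 (ball_R _ _ _)) in Hx; simpl in Hx. rewrite Rminus_0_l, Rabs_Ropp in Hx. lra.
Qed.

Lemma locally_open_unit (t : R) : 0 < t < 1 -> locally t (fun x => 0 < x < 1).
Proof. apply (open_and (fun x => 0 < x) (fun x => x < 1)); [apply open_gt | apply open_lt]. Qed.

Lemma at_right_0_interval (P : R -> Prop) :
  at_right 0 P -> exists d, 0 < d /\ forall t, 0 < t < d -> P t.
Proof.
  intros [e He]. exists e. split; [apply cond_pos |]. intros t [Ht0 Hte].
  apply He; [| exact Ht0]. apply (proj2 (ball_R _ _ _)). rewrite Rminus_0_r, Rabs_right; lra.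
Qed.

Lemma at_right_0_lt1 : at_right 0 (fun t => t < 1).
Proof.
  exists (mkposreal 1 Rlt_0_1). intros t Ht _.
  apply (proj1 (ball_R _ _ _)), Rabs_def2 in Ht. simpl in Ht. lra.
Qed.

Lemma filterlim_id_at_right : filterlim (fun h : R => h) (at_right 0) (locally 0).
Proof. intros P [e HP]. exists e. intros y Hy _. apply HP, Hy. Qed.

Section PlaneLimits.
Context {T : Type} {F : (T -> Prop) -> Prop} {FF : Filter F}.

Lemma filterlim_fst_pt (h : T -> pt) w :
  filterlim h F (locally w) -> filterlim (fun t => fst (h t)) F (locally (fst w)).
Proof.
  intros H. apply (filterlim_comp _ _ _ h fst F _ _ H).
  intros P [e HP]. exists e. intros [x y] [Hx _]. apply HP, Hx.
Qed.

Lemma filterlim_snd_pt (h : T -> pt) w :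
  filterlim h F (locally w) -> filterlim (fun t => snd (h t)) F (locally (snd w)).
Proof.
  intros H. apply (filterlim_comp _ _ _ h snd F _ _ H).
  intros P [e HP]. exists e. intros [x y] [_ Hy]. apply HP, Hy.
Qed.

Lemma filterlim_pt (h : T -> pt) w :
  filterlim (fun t => fst (h t)) F (locally (fst w)) ->
  filterlim (fun t => snd (h t)) F (locally (snd w)) ->
  filterlim h F (locally w).
Proof.
  intros Hf Hs P [e HP]. unfold filtermap.
  apply (filter_imp (fun t => ball (fst w) e (fst (h t)) /\ ball (snd w) e (snd (h t)))).
  - intros t Ht. apply HP. destruct w, (h t). exact Ht.
  - apply filter_and; [apply Hf | apply Hs]; exists e; auto.
Qed.

Lemma filterlim_vadd (h g : T -> R * R) v w :
  filterlim h F (locally v) -> filterlim g F (locally w) ->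
  filterlim (fun t => vadd (h t) (g t)) F (locally (vadd v w)).
Proof.
  intros Hh Hg. exact (filterlim_comp_2 h g plus Hh Hg
    (@filterlim_plus _ (prod_NormedModule R_AbsRing R_NormedModule R_NormedModule) v w)).
Qed.

Lemma filterlim_vscal (k : T -> R) (h : T -> R * R) a w :
  filterlim k F (locally a) -> filterlim h F (locally w) ->
  filterlim (fun t => vscal (k t) (h t)) F (locally (vscal a w)).
Proof.
  intros Hk Hh. exact (filterlim_comp_2 k h scal Hk Hh
    (@filterlim_scal _ (prod_NormedModule R_AbsRing R_NormedModule R_NormedModule) a w)).
Qed.

Lemma filterlim_vnorm (h : T -> R * R) w :
  filterlim h F (locally w) -> filterlim (fun t => vnorm (h t)) F (locally (vnorm w)).
Proof.
  intros H. apply (filterlim_comp _ _ _ _ sqrt F (locally (dot w w)));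
    [| apply continuous_sqrt].
  unfold dot.
  assert (Hsq : forall k : T -> R, forall a, filterlim k F (locally a) ->
      filterlim (fun t => k t * k t) F (locally (a * a))).
  { intros k a Hk. exact (filterlim_comp_2 k k Rmult Hk Hk (@filterlim_mult R_AbsRing a a)). }
  exact (filterlim_comp_2 _ _ Rplus (Hsq _ _ (filterlim_fst_pt h w H))
    (Hsq _ _ (filterlim_snd_pt h w H)) (@filterlim_plus _ R_NormedModule _ _)).
Qed.

Lemma filter_vector_neq0 (h : T -> R * R) w :
  filterlim h F (locally w) -> w <> (0, 0) -> F (fun t => h t <> (0, 0)).
Proof.
  intros H Hw. apply (filter_imp (fun t => 0 < vnorm (h t))).
  - intros t Ht E. rewrite E in Ht. unfold vnorm, dot in Ht. simpl in Ht.
    rewrite Rmult_0_l, Rplus_0_l, sqrt_0 in Ht. lra.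
  - apply (filterlim_vnorm h w H). apply open_gt.
    apply sqrt_lt_R0. destruct w as [a b]. unfold dot; simpl.
    destruct (Req_dec a 0), (Req_dec b 0); subst; [now contradiction Hw | nra ..].
Qed.

Lemma filterlim_normalize (h : T -> R * R) w :
  w <> (0, 0) -> filterlim h F (locally w) ->
  filterlim (fun t => normalize (h t)) F (locally (normalize w)).
Proof.
  intros Hw H. apply filterlim_vscal; [| exact H].
  apply (filterlim_comp _ _ _ _ Rinv F _ _ (filterlim_vnorm h w H)).
  apply continuous_Rinv. unfold vnorm. intros E.
  apply sqrt_eq_0 in E; [| unfold dot; nra].
  destruct w as [a b]. unfold dot in E; simpl in E.
  apply Hw. f_equal; nra.
Qed.

Lemma filterlim_smooth_comp (U : pt -> Prop) (f : pt -> R) (h : T -> pt) w :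
  smooth_on U f -> U w -> filterlim h F (locally w) ->
  filterlim (fun t => f (h t)) F (locally (f w)).
Proof.
  intros Hf Uw H. exact (filterlim_comp _ _ _ h f F _ _ H (proj1 (Hf 0%nat) w Uw)).
Qed.

Lemma filterlim_vsmooth_comp (U : pt -> Prop) (G : pt -> R * R) (h : T -> pt) w :
  vsmooth_on U G -> U w -> filterlim h F (locally w) ->
  filterlim (fun t => G (h t)) F (locally (G w)).
Proof.
  intros [Hf Hs] Uw H. apply filterlim_pt.
  - exact (filterlim_smooth_comp U _ h w Hf Uw H).
  - exact (filterlim_smooth_comp U _ h w Hs Uw H).
Qed.

End PlaneLimits.

Section RegularCurve.
Variables (S : pt -> Prop) (gam gamd : R -> pt).
Hypothesis Hgam : C1_regular_curve S gam gamd.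

Lemma C1_curve_right_cont0 : filterlim gam (at_right 0) (locally (gam 0)).
Proof.
  destruct Hgam as [_ [_ [Hq1 [Hq2 _]]]].
  set (dq h := ((fst (gam h) - fst (gam 0)) / h, (snd (gam h) - snd (gam 0)) / h)).
  assert (Hdq : filterlim dq (at_right 0) (locally (gamd 0))) by now apply filterlim_pt.
  assert (H := filterlim_vadd _ _ _ _ (filterlim_const (gam 0))
                 (filterlim_vscal _ _ _ _ filterlim_id_at_right Hdq)).
  replace (vadd (gam 0) (vscal 0 (gamd 0))) with (gam 0) in H
    by (unfold vadd, vscal; destruct (gam 0), (gamd 0); simpl; f_equal; ring).
  revert H. apply filterlim_ext_loc.
  exists (mkposreal 1 Rlt_0_1). intros h _ Hh. unfold vadd, vscal, dq; simpl.
  destruct (gam h), (gam 0); simpl; f_equal; field; lra.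
Qed.

Lemma C1_curve_deriv_right_cont0 : filterlim gamd (at_right 0) (locally (gamd 0)).
Proof.
  destruct Hgam as [_ [_ [_ [_ [Hcd _]]]]]. intros P HP.
  specialize (Hcd 0 (conj (Rle_refl 0) Rlt_0_1) P HP). unfold filtermap, within in *.
  generalize (filter_and _ _ Hcd at_right_0_lt1). unfold at_right, within.
  apply filter_imp. intros x [HPx Hx1] Hx0. apply HPx. split; [lra | exact (Hx1 Hx0)].
Qed.

Lemma C1_curve_deriv_cont (t : R) : 0 < t < 1 -> continuous gamd t.
Proof.
  destruct Hgam as [_ [_ [_ [_ [Hcd _]]]]]. intros Ht P HP.
  specialize (Hcd t (conj (Rlt_le _ _ (proj1 Ht)) (proj2 Ht)) P HP). unfold filtermap, within in *.
  generalize (filter_and _ _ Hcd (locally_open_unit t Ht)). apply filter_imp.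
  intros x [HPx Hx]. apply HPx. lra.
Qed.

Lemma C1_curve_leaves_start : at_right 0 (fun t => gam t <> gam 0).
Proof.
  destruct Hgam as [_ [_ [Hq1 [Hq2 [_ Hreg]]]]].
  assert (Hd0 := Hreg 0 (conj (Rle_refl 0) Rlt_0_1)).
  assert (Hquot : forall t, gam t = gam 0 ->
            (fst (gam t) - fst (gam 0)) / t = 0 /\ (snd (gam t) - snd (gam 0)) / t = 0).
  { intros t ->. unfold Rdiv. rewrite !Rminus_eq_0, !Rmult_0_l. auto. }
  destruct (Req_dec (fst (gamd 0)) 0) as [Ha | Ha].
  - assert (Hb : snd (gamd 0) <> 0).
    { intros Hb. apply Hd0. destruct (gamd 0); simpl in *; subst; reflexivity. }
    generalize (Hq2 _ (locally_neq _ Hb)). unfold filtermap. apply filter_imp.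
    intros t Ht E. exact (Ht (proj2 (Hquot t E))).
  - generalize (Hq1 _ (locally_neq _ Ha)). unfold filtermap. apply filter_imp.
    intros t Ht E. exact (Ht (proj1 (Hquot t E))).
Qed.

End RegularCurve.

Lemma continuous_nonzero_same_sign (f : R -> R) a c :
  (forall x, a < x < c -> continuity_pt f x) -> (forall x, a < x < c -> f x <> 0) ->
  forall x y, a < x < c -> a < y < c -> 0 < f x * f y.
Proof.
  intros Hc Hn.
  assert (Hlt : forall x y, a < x < c -> a < y < c -> x < y -> 0 < f x * f y).
  { intros x y Hx Hy Hxy.
    assert (Hcxy : forall g : R -> R, (forall s, a < s < c -> continuity_pt g s) ->
              g x < 0 < g y -> exists z, x <= z <= y /\ g z = 0).
    { intros g Hg Hsign.
      destruct (Ranalysis5.IVT_interv g x y) as [z Hz];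
        [intros s Hs; apply Hg; lra | exact Hxy | lra | lra | now exists z]. }
    destruct (Rtotal_order (f x) 0) as [Hfx | [Hfx | Hfx]];
      [| now contradiction (Hn x Hx) |];
      destruct (Rtotal_order (f y) 0) as [Hfy | [Hfy | Hfy]];
      try (now contradiction (Hn y Hy)); try nra.
    - destruct (Hcxy f Hc (conj Hfx Hfy)) as [z [Hz Hfz]]. exfalso. apply (Hn z); [lra | exact Hfz].
    - destruct (Hcxy (fun s => - f s)) as [z [Hz Hfz]].
      + intros s Hs. apply continuity_pt_opp, Hc, Hs.
      + lra.
      + exfalso. apply (Hn z); lra. }
  intros x y Hx Hy. destruct (Rtotal_order x y) as [Hxy | [-> | Hxy]].
  - exact (Hlt x y Hx Hy Hxy).
  - assert (Hfy := Hn y Hy). nra.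
  - rewrite Rmult_comm. exact (Hlt y x Hy Hx Hxy).
Qed.

Lemma is_derive_along_curve (U : pt -> Prop) (f : pt -> R) (c : R -> pt) (t a b : R) :
  open U -> Ck 1 U f -> U (c t) ->
  is_derive (fun s => fst (c s)) t a -> is_derive (fun s => snd (c s)) t b ->
  is_derive (fun s => f (c s)) t (pu f (c t) * a + pv f (c t) * b).
Proof.
  intros HU [_ [Hex [Hpu _]]] Uq Ha Hb. set (q := c t) in *.
  assert (Hdiff : differentiable_pt_lim (fun x y => f (x, y)) (fst q) (snd q) (pu f q) (pv f q)).
  { apply filterdiff_differentiable_pt_lim.
    replace (pu f q) with ((fun x y => pu f (x, y)) (fst q) (snd q)) by (destruct q; reflexivity).
    eapply filterdiff_ext_lin.
    - apply (is_derive_filterdiff (fun x y => f (x, y)) (fst q) (snd q) (fun x y => pu f (x, y))).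
      + rewrite <- surjective_pairing. generalize (HU q Uq). apply filter_imp.
        intros [x y] Hxy. apply Derive_correct, (Hex _ Hxy).
      + apply Derive_correct, (Hex _ Uq).
      + rewrite <- surjective_pairing. apply (continuous_ext (pu f)); [now intros [] |].
        exact (proj1 Hpu q Uq).
    - reflexivity. }
  apply (is_derive_ext (fun s => (fun x y => f (x, y)) (fst (c s)) (snd (c s)))).
  { intros s. simpl. now rewrite <- surjective_pairing. }
  apply is_derive_Reals.
  exact (derivable_pt_lim_comp_2d _ (fun s => fst (c s)) (fun s => snd (c s)) _ _ _ _ _ Hdiff
    (proj1 (is_derive_Reals _ _ _) Ha) (proj1 (is_derive_Reals _ _ _) Hb)).
Qed.

Lemma derivative_eq0_along_zero_set (U : pt -> Prop) (f : pt -> R) (c : R -> pt) (t a b : R) :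
  open U -> Ck 1 U f -> U (c t) -> 0 < t < 1 -> (forall s, 0 < s < 1 -> f (c s) = 0) ->
  is_derive (fun s => fst (c s)) t a -> is_derive (fun s => snd (c s)) t b ->
  pu f (c t) * a + pv f (c t) * b = 0.
Proof.
  intros HU Hf Uq Ht Hzero Ha Hb.
  rewrite <- (is_derive_unique _ _ _ (is_derive_along_curve U f c t a b HU Hf Uq Ha Hb)).
  apply is_derive_unique.
  apply (is_derive_ext_loc (fun _ => 0)); [| apply (is_derive_const 0)].
  generalize (locally_open_unit t Ht). apply filter_imp. intros s Hs. symmetry. exact (Hzero s Hs).
Qed.

Lemma vscal_neq0 (b : R) (w : R * R) : b <> 0 -> w <> (0, 0) -> vscal b w <> (0, 0).
Proof.
  destruct w as [w1 w2]. unfold vscal; simpl. intros Hb Hw E. injection E as E1 E2.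
  apply Hw. apply Rmult_integral in E1, E2. f_equal; tauto.
Qed.

Lemma normalize_vscal (b : R) (w : R * R) :
  b <> 0 -> normalize (vscal b w) = vscal (b / Rabs b) (normalize w).
Proof.
  intros Hb. unfold normalize, vnorm, vscal, dot. destruct w as [w1 w2]; simpl.
  replace (b * w1 * (b * w1) + b * w2 * (b * w2)) with ((b * b) * (w1 * w1 + w2 * w2)) by ring.
  rewrite sqrt_mult by nra.
  replace (sqrt (b * b)) with (Rabs b) by (symmetry; apply sqrt_Rsqr_abs).
  assert (Hab : Rabs b <> 0) by now apply Rabs_no_R0.
  destruct (Req_dec (sqrt (w1 * w1 + w2 * w2)) 0) as [Z | Z].
  - rewrite Z, Rmult_0_r, Rinv_0. f_equal; ring.
  - f_equal; field; auto.
Qed.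

Lemma div_Rabs_same_sign (x y : R) : 0 < x * y -> x / Rabs x = y / Rabs y.
Proof.
  intros H. destruct (Rlt_le_dec 0 x).
  - assert (0 < y) by nra. rewrite !Rabs_right by lra. field; lra.
  - assert (x <> 0) by (intros ->; lra). assert (x < 0) by lra. assert (y < 0) by nra.
    rewrite !Rabs_left by lra. field; lra.
Qed.

Lemma orth_det2_eq0 (u v : R * R) : dot u v = 0 -> det2 u v = 0 -> v <> (0, 0) -> u = (0, 0).
Proof.
  destruct u as [u1 u2], v as [v1 v2]. unfold dot, det2; simpl. intros Hdot Hdet Hv.
  assert (Hv2 : 0 < v1 * v1 + v2 * v2).
  { destruct (Req_dec v1 0), (Req_dec v2 0); subst; [now contradiction Hv | nra ..]. }
  (* Lagrange's identity: |u|^2 |v|^2 = det2 u v ^ 2 + dot u v ^ 2 *)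
  assert (E : (u1 * u1 + u2 * u2) * (v1 * v1 + v2 * v2) = 0).
  { replace ((u1 * u1 + u2 * u2) * (v1 * v1 + v2 * v2))
      with ((u1 * v2 - u2 * v1) ^ 2 + (u1 * v1 + u2 * v2) ^ 2) by ring.
    rewrite Hdot, Hdet. ring. }
  apply Rmult_integral in E as [E | E]; [f_equal; nra | lra].
Qed.

Section CoherentTangentBundle.
Variables (U : pt -> Prop) (C : CTB_chart U).

Lemma filterlim_psi_at {T : Type} {F : (T -> Prop) -> Prop} {FF : Filter F}
    (c : T -> pt) (X : T -> R * R) q X0 :
  U q -> filterlim c F (locally q) -> filterlim X F (locally X0) ->
  filterlim (fun t => psi_at C (c t) (X t)) F (locally (psi_at C q X0)).
Proof.
  intros Uq Hc HX. unfold psi_at.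
  apply filterlim_vadd; apply filterlim_vscal.
  - exact (filterlim_fst_pt X X0 HX).
  - exact (filterlim_vsmooth_comp U _ c q (psi_u_smooth U C) Uq Hc).
  - exact (filterlim_snd_pt X X0 HX).
  - exact (filterlim_vsmooth_comp U _ c q (psi_v_smooth U C) Uq Hc).
Qed.

Lemma psi_at_psi_u_eq0 (q : pt) (X : R * R) :
  psi_u C q = (0, 0) -> psi_at C q X = vscal (snd X) (psi_v C q).
Proof. intros Hq. unfold psi_at. rewrite Hq. unfold vadd, vscal; simpl. f_equal; ring. Qed.

Lemma g_coordinate_psi (g11 g12 g22 : pt -> R) (q : pt) :
  riemannian_metric U g11 g12 g22 -> g_coordinate_system C g11 g12 g22 -> U q ->
  psi_v C q <> (0, 0) /\ dot (psi_u C q) (psi_v C q) = 0.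
Proof.
  intros [_ [_ [_ Hpos]]] [l1 [l2 Hl]] Uq.
  destruct (Hl q Uq) as [[Hl1 Hl12] [Huu [Huv [Hvu Hvv]]]]. destruct (Hpos q Uq) as [Hg11 Hdet].
  (* d_u and d_v are eigenvectors of I for distinct eigenvalues, hence g-orthogonal *)
  assert (Hg12 : g12 q = 0).
  { assert (Hsym : dot (psi_v C q) (psi_u C q) = dot (psi_u C q) (psi_v C q)) by (unfold dot; ring).
    assert (E : (l2 q - l1 q) * g12 q = 0)
      by (rewrite Rmult_minus_distr_r, <- Hvu, <- Huv, Hsym; ring).
    apply Rmult_integral in E as [E | E]; lra. }
  split.
  - intros Z. rewrite Z in Hvv. unfold dot in Hvv; simpl in Hvv.
    rewrite Hg12 in Hdet. nra.
  - rewrite Huv, Hg12. ring.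
Qed.

Lemma pu_lam_eq0 (q : pt) :
  U q -> psi_u C q = (0, 0) ->
  pu (fun r => fst (psi_u C r)) q = 0 -> pu (fun r => snd (psi_u C r)) q = 0 ->
  pu (lam C) q = 0.
Proof.
  intros Uq Hq H1 H2.
  assert (D1 := proj1 (proj1 (proj2 (proj1 (psi_u_smooth U C) 1%nat)) q Uq)).
  assert (D2 := proj1 (proj1 (proj2 (proj2 (psi_u_smooth U C) 1%nat)) q Uq)).
  assert (D3 := proj1 (proj1 (proj2 (proj1 (psi_v_smooth U C) 1%nat)) q Uq)).
  assert (D4 := proj1 (proj1 (proj2 (proj2 (psi_v_smooth U C) 1%nat)) q Uq)).
  unfold pu, lam, det2 in *. simpl in *.
  rewrite Derive_minus by (apply ex_derive_mult; assumption).
  rewrite !Derive_mult by assumption.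
  rewrite H1, H2, <- surjective_pairing, Hq. simpl. ring.
Qed.

Lemma A2_pu_lam_neq0 (q : pt) : A2_point C q -> psi_u C q = (0, 0) -> pu (lam C) q <> 0.
Proof.
  intros [_ Htrans] Hq Hpu. apply (Htrans (1, 0)); simpl.
  - split; [intros E; injection E; lra |].
    rewrite psi_at_psi_u_eq0 by exact Hq. unfold vscal; simpl. f_equal; ring.
  - rewrite Hpu. ring.
Qed.

End CoherentTangentBundle.

Definition psi_direction_converges {U : pt -> Prop} (C : CTB_chart U) (gam gamd : R -> pt) : Prop :=
  (exists eps, 0 < eps /\ forall t, 0 < t < eps -> psi_at C (gam t) (gamd t) <> (0, 0)) /\
  exists L : R * R,
    filterlim (fun t => normalize (psi_at C (gam t) (gamd t))) (at_right 0) (locally L).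

Lemma psi_direction_converges_nonnull (U : pt -> Prop) (C : CTB_chart U) (gam gamd : R -> pt) :
  C1_regular_curve U gam gamd -> psi_at C (gam 0) (gamd 0) <> (0, 0) ->
  psi_direction_converges C gam gamd.
Proof.
  intros Hcur Hnull.
  assert (U0 : U (gam 0)) by (apply (proj1 Hcur); lra).
  assert (Hlim := filterlim_psi_at U C _ _ _ _ U0
                    (C1_curve_right_cont0 _ _ _ Hcur) (C1_curve_deriv_right_cont0 _ _ _ Hcur)).
  split.
  - destruct (at_right_0_interval _ (filter_vector_neq0 _ _ Hlim Hnull)) as [d [Hd Hnz]].
    now exists d.
  - exists (normalize (psi_at C (gam 0) (gamd 0))). now apply filterlim_normalize.
Qed.

Section SingularCurve.
Variables (U V : pt -> Prop) (C : CTB_chart U) (gam gamd : R -> pt).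
Hypothesis HU : open U.
Hypothesis Hcur : C1_regular_curve U gam gamd.
Hypothesis Hsing : forall t, 0 <= t < 1 -> singular C (gam t).
Hypothesis Hpsi : forall q, U q -> psi_v C q <> (0, 0) /\ dot (psi_u C q) (psi_v C q) = 0.
Hypothesis HV : open V.
Hypothesis HV0 : V (gam 0).
Hypothesis HVU : forall q, V q -> U q.
Hypothesis HA2 : forall q, V q -> q <> gam 0 -> singular C q -> A2_point C q.

Lemma psi_u_along_singular_curve (t : R) : 0 <= t < 1 -> psi_u C (gam t) = (0, 0).
Proof.
  intros Ht. destruct (Hsing t Ht) as [Ut Hlam]. destruct (Hpsi _ Ut) as [Hv Hdot].
  exact (orth_det2_eq0 _ _ Hdot Hlam Hv).
Qed.

Lemma singular_curve_not_null_tangent (t : R) :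
  0 < t < 1 -> V (gam t) -> gam t <> gam 0 -> snd (gamd t) <> 0.
Proof.
  intros Ht Vt Hneq Hb. destruct Hcur as [_ [Hder [_ [_ [_ Hreg]]]]].
  assert (Ht' : 0 <= t < 1) by lra.
  assert (Ut := HVU _ Vt). destruct (Hder t Ht) as [Hd1 Hd2].
  assert (Ha : fst (gamd t) <> 0).
  { intros Ha. apply (Hreg t Ht'). destruct (gamd t); simpl in *; subst; reflexivity. }
  (* the tangent is a multiple of d_u, along which psi_u vanishes identically *)
  assert (Hpu : forall k : R * R -> R, Ck 1 U (fun r => k (psi_u C r)) -> k (0, 0) = 0 ->
            pu (fun r => k (psi_u C r)) (gam t) = 0).
  { intros k Hk Hk0.
    assert (Hzero : forall s, 0 < s < 1 -> k (psi_u C (gam s)) = 0).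
    { intros s Hs. rewrite psi_u_along_singular_curve by lra. exact Hk0. }
    assert (E := derivative_eq0_along_zero_set U _ gam t _ _ HU Hk Ut Ht Hzero Hd1 Hd2).
    rewrite Hb, Rmult_0_r, Rplus_0_r in E.
    apply Rmult_integral in E as [E | E]; [exact E | contradiction]. }
  apply (A2_pu_lam_neq0 U C (gam t) (HA2 _ Vt Hneq (Hsing t Ht'))
           (psi_u_along_singular_curve t Ht')).
  apply (pu_lam_eq0 U C _ Ut (psi_u_along_singular_curve t Ht')).
  - exact (Hpu fst (proj1 (psi_u_smooth U C) 1%nat) eq_refl).
  - exact (Hpu snd (proj2 (psi_u_smooth U C) 1%nat) eq_refl).
Qed.

Lemma singular_curve_eventually_not_null :
  exists d, 0 < d <= 1 /\ forall t, 0 < t < d -> snd (gamd t) <> 0.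
Proof.
  assert (Hev : at_right 0 (fun t => t < 1 /\ V (gam t) /\ gam t <> gam 0)).
  { repeat apply filter_and.
    - exact at_right_0_lt1.
    - exact (C1_curve_right_cont0 _ _ _ Hcur V (HV _ HV0)).
    - exact (C1_curve_leaves_start _ _ _ Hcur). }
  destruct (at_right_0_interval _ Hev) as [d [Hd Hprop]].
  assert (Hmin : 0 < Rmin d 1 <= 1 /\ Rmin d 1 <= d) by (unfold Rmin; destruct (Rle_dec d 1); lra).
  exists (Rmin d 1). split; [exact (proj1 Hmin) |].
  intros t Ht. destruct (Hprop t ltac:(lra)) as [Ht1 [Vt Hneq]].
  exact (singular_curve_not_null_tangent t (conj (proj1 Ht) Ht1) Vt Hneq).
Qed.

Lemma psi_direction_converges_singular : psi_direction_converges C gam gamd.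
Proof.
  destruct singular_curve_eventually_not_null as [d [Hd Hb]].
  assert (Himage : forall t, 0 < t < d ->
            psi_at C (gam t) (gamd t) = vscal (snd (gamd t)) (psi_v C (gam t))).
  { intros t Ht. apply psi_at_psi_u_eq0, psi_u_along_singular_curve. lra. }
  assert (Hsign : forall t, 0 < t < d -> 0 < snd (gamd t) * snd (gamd (d / 2))).
  { intros t Ht.
    apply (continuous_nonzero_same_sign (fun s => snd (gamd s)) 0 d); [| exact Hb | exact Ht | lra].
    intros s Hs. apply continuity_pt_filterlim, filterlim_snd_pt.
    apply (C1_curve_deriv_cont U gam gamd Hcur). lra. }
  assert (U0 : U (gam 0)) by (apply HVU, HV0).
  split.
  - exists d. split; [lra |]. intros t Ht. rewrite Himage by exact Ht.
    apply vscal_neq0; [exact (Hb t Ht) |]. apply Hpsi, (proj1 (Hsing t ltac:(lra))).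
  - set (s0 := snd (gamd (d / 2)) / Rabs (snd (gamd (d / 2)))).
    exists (vscal s0 (normalize (psi_v C (gam 0)))).
    apply (filterlim_ext_loc (fun t => vscal s0 (normalize (psi_v C (gam t))))).
    + exists (mkposreal d (proj1 Hd)). intros t Ht Ht0.
      apply (proj1 (ball_R _ _ _)) in Ht. simpl in Ht. rewrite Rminus_0_r, Rabs_right in Ht by lra.
      rewrite Himage, normalize_vscal by first [lra | apply Hb; lra].
      unfold s0. rewrite (div_Rabs_same_sign _ _ (Hsign t ltac:(lra))). reflexivity.
    + apply filterlim_vscal; [apply filterlim_const |].
      apply filterlim_normalize; [exact (proj1 (Hpsi _ U0)) |].
      exact (filterlim_vsmooth_comp U _ gam _ (psi_v_smooth U C) U0
               (C1_curve_right_cont0 _ _ _ Hcur)).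
Qed.

End SingularCurve.

Theorem mainTheorem2 (U : pt -> Prop) (C : CTB_chart U)
    (g11 g12 g22 : pt -> R) (p : pt) (gam gamd : R -> pt) :
  open U ->
  riemannian_metric U g11 g12 g22 ->
  peak C p ->
  g_coordinate_system C g11 g12 g22 ->
  C1_regular_curve U gam gamd ->
  gam 0 = p ->
  (psi_at C p (gamd 0) <> (0, 0) \/ (forall t, 0 <= t < 1 -> singular C (gam t))) ->
  (exists eps, 0 < eps /\ forall t, 0 < t < eps -> psi_at C (gam t) (gamd t) <> (0, 0)) /\
  exists L : R * R,
    filterlim (fun t => normalize (psi_at C (gam t) (gamd t))) (at_right 0) (locally L).
Proof.
  intros HU Hmetric Hpeak Hgcoord Hcur <- [Hnull | Hsing].
  - exact (psi_direction_converges_nonnull U C gam gamd Hcur Hnull).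
  - destruct Hpeak as [_ [_ [V [HV [HV0 [HVU [HA2 _]]]]]]].
    apply (psi_direction_converges_singular U V C gam gamd HU Hcur Hsing); try assumption.
    intros q Uq. exact (g_coordinate_psi U C g11 g12 g22 q Hmetric Hgcoord Uq).
Qed.
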